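(* Let $X$ be a totally disconnected compact metric space and let $I_X$ be the identity map of $X$. Then every point of $X$ is a topologically stable point and a GH-stable point of $I_X$.
   Context: For a homeomorphism $f$ of a compact metric space $(X,d)$: $\mathcal{O}_f(x)=\{f^n(x):n\in\mathbb{Z}\}$; $d_{C^0}(f,\bar f)=\sup_x d(f(x),\bar f(x))$. $x$ is a topologically stable point of $f$ if for every $\epsilon>0$ there is $\delta>0$ such that for every homeomorphism $g$ of $X$ with $d_{C^0}(f,g)\le\delta$ there is a continuous $h:\overline{\mathcal{O}_g(x)}\to X$ with $f\circ h=h\circ g$ and $d(h(z),z)\le\epsilon$ on $\overline{\mathcal{O}_g(x)}$. Hausdorff distance: $d^X_H(A,B)=\max\{\sup_{a\in A}\inf_{b\in B}d(a,b),\sup_{b\in B}\inf_{a\in A}d(a,b)\}$. A map $i:X\to Y$ between compact metric spaces is a $\delta$-isometry if $\max\{d^Y_H(i(X),Y),\sup_{x,x'}|d^Y(i(x),i(x'))-d^X(x,x')|\}<\delta$. For homeomorphisms $f$ of $X$ and $g$ of $Y$, $d_{GH^0}(f,g)=\inf\{\delta>0:$ there exist $\delta$-isometries $i:X\to Y$, $j:Y\to X$ with $\sup_x d^Y(g(i(x)),i(f(x)))<\delta$ and $\sup_y d^X(j(g(y)),f(j(y)))<\delta\}$. $x$ is a GH-stable point of $f$ if for every $\epsilon>0$ there is $\delta>0$ such that for every compact metric space $(Y,d^Y)$ and homeomorphism $g$ of $Y$ with $d_{GH^0}(f,g)<\delta$ there is an $\epsilon$-isometry $j:Y\to X$ such that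 for each $y\in j^{-1}(x)$ there is a continuous $h:\overline{\mathcal{O}_g(y)}\to X$ with $d(h(z),j(z))<\epsilon$ for all $z\in\overline{\mathcal{O}_g(y)}$ and $f\circ h=h\circ g$. *)

From Stdlib Require Import Reals List.
From Coquelicot Require Import Coquelicot.
Open Scope R_scope.

Section Defs.

Definition is_metric {X : Type} (d : X -> X -> R) : Prop :=
  (forall x y, 0 <= d x y) /\
  (forall x y, d x y = 0 <-> x = y) /\
  (forall x y, d x y = d y x) /\
  (forall x y z, d x z <= d x y + d y z).

Definition open_set {X : Type} (d : X -> X -> R) (U : X -> Prop) : Prop :=
  forall x, U x -> exists r, 0 < r /\ forall y, d x y < r -> U y.

Definition compact_metric {X : Type} (d : X -> X -> R) : Prop :=
  forall (I : Type) (U : I -> X -> Prop),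
    (forall i, open_set d (U i)) -> (forall x, exists i, U i x) ->
    exists l : list I, forall x, exists i, In i l /\ U i x.

Definition connected_subset {X : Type} (d : X -> X -> R) (A : X -> Prop) : Prop :=
  ~ exists U V : X -> Prop,
      open_set d U /\ open_set d V /\
      (forall x, A x -> U x \/ V x) /\
      (exists x, A x /\ U x) /\ (exists x, A x /\ V x) /\
      (forall x, A x -> U x -> V x -> False).

Definition totally_disconnected {X : Type} (d : X -> X -> R) : Prop :=
  forall A, connected_subset d A -> forall x y, A x -> A y -> x = y.

Definition continuous_on {X Y : Type} (dX : X -> X -> R) (dY : Y -> Y -> R)
  (A : X -> Prop) (f : X -> Y) : Prop :=
  forall x, A x -> forall eps, 0 < eps -> exists del, 0 < del /\
    forall y, A y -> dX x y < del -> dY (f x) (f y) < eps.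

Definition continuous_map {X Y : Type} (dX : X -> X -> R) (dY : Y -> Y -> R)
  (f : X -> Y) : Prop := continuous_on dX dY (fun _ => True) f.

Definition homeomorphism {X : Type} (d : X -> X -> R) (f : X -> X) : Prop :=
  continuous_map d d f /\
  exists g : X -> X, continuous_map d d g /\
    (forall x, g (f x) = x) /\ (forall x, f (g x) = x).

(* the orbit {f^n(x) : n in Z}: y = f^n x (n >= 0) or f^n y = x (i.e. y = f^{-n} x) *)
Definition orbit {X : Type} (f : X -> X) (x : X) : X -> Prop :=
  fun y => exists n : nat, y = Nat.iter n f x \/ Nat.iter n f y = x.

Definition closure {X : Type} (d : X -> X -> R) (A : X -> Prop) : X -> Prop :=
  fun y => forall eps, 0 < eps -> exists a, A a /\ d y a < eps.

Definition sup_over {T : Type} (F : T -> Rbar) : Rbar :=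
  Rbar_lub (fun r => exists t, r = F t).
Definition inf_over {T : Type} (F : T -> Rbar) : Rbar :=
  Rbar_glb (fun r => exists t, r = F t).
Definition rbar_max (a b : Rbar) : Rbar := Rbar_lub (fun r => r = a \/ r = b).

Definition dC0 {X : Type} (d : X -> X -> R) (f g : X -> X) : Rbar :=
  sup_over (fun x => Finite (d (f x) (g x))).

Definition hausdorff {Y : Type} (d : Y -> Y -> R) (A B : Y -> Prop) : Rbar :=
  rbar_max
    (sup_over (fun a : {a : Y | A a} =>
       inf_over (fun b : {b : Y | B b} => Finite (d (proj1_sig a) (proj1_sig b)))))
    (sup_over (fun b : {b : Y | B b} =>
       inf_over (fun a : {a : Y | A a} => Finite (d (proj1_sig a) (proj1_sig b))))).

Definition delta_isometry {X Y : Type} (dX : X -> X -> R) (dY : Y -> Y -> R)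
  (del : R) (i : X -> Y) : Prop :=
  Rbar_lt
    (rbar_max (hausdorff dY (fun y => exists x, y = i x) (fun _ => True))
              (sup_over (fun p : X * X =>
                 Finite (Rabs (dY (i (fst p)) (i (snd p)) - dX (fst p) (snd p))))))
    (Finite del).

Definition dGH0 {X Y : Type} (dX : X -> X -> R) (dY : Y -> Y -> R)
  (f : X -> X) (g : Y -> Y) : Rbar :=
  Rbar_glb (fun r => exists del : R, r = Finite del /\ 0 < del /\
    exists (i : X -> Y) (j : Y -> X),
      delta_isometry dX dY del i /\ delta_isometry dY dX del j /\
      Rbar_lt (sup_over (fun x => Finite (dY (g (i x)) (i (f x))))) (Finite del) /\
      Rbar_lt (sup_over (fun y => Finite (dX (j (g y)) (f (j y))))) (Finite del)).

Definition top_stable_point {X : Type} (d : X -> X -> R) (f : X -> X) (x : X) : Prop :=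
  forall eps, 0 < eps -> exists del, 0 < del /\
    forall g : X -> X, homeomorphism d g -> Rbar_le (dC0 d f g) (Finite del) ->
      exists h : X -> X,
        continuous_on d d (closure d (orbit g x)) h /\
        (forall z, closure d (orbit g x) z -> f (h z) = h (g z)) /\
        (forall z, closure d (orbit g x) z -> d (h z) z <= eps).

Definition GH_stable_point {X : Type} (d : X -> X -> R) (f : X -> X) (x : X) : Prop :=
  forall eps, 0 < eps -> exists del, 0 < del /\
    forall (Y : Type) (dY : Y -> Y -> R), is_metric dY -> compact_metric dY ->
    forall g : Y -> Y, homeomorphism dY g -> Rbar_lt (dGH0 d dY f g) (Finite del) ->
      exists j : Y -> X, delta_isometry dY d eps j /\
        forall y, j y = x ->
          exists h : Y -> X,
            continuous_on dY d (closure dY (orbit g y)) h /\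
            (forall z, closure dY (orbit g y) z -> d (h z) (j z) < eps) /\
            (forall z, closure dY (orbit g y) z -> f (h z) = h (g z)).

End Defs.

(** For the identity, a constant conjugacy [h := fun _ => x] always commutes,
    so both stability properties reduce to showing that every orbit of a
    homeomorphism [delta]-close to the identity (in the GH case: its image
    under an approximate isometry) stays near [x].  Such an orbit is a
    [delta]-chain from [x], so it suffices that in a compact totally
    disconnected space the [delta]-chain component of [x] shrinks to [x] as
    [delta -> 0].  The intersection of all these components is connected
    (a separation of it would, by compactness, already separate some
    [delta]-chain component), hence equal to [{x}]; compactness again turns
    this into uniform smallness. *)
From Stdlib Require Import Reals Lra List Classical.
From Coquelicot Require Import Coquelicot.
(* Imported after Coquelicot so that [continuous_on] is the one of [Defs]. *)
From Pilot Require Import Defs.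
Open Scope R_scope.

Lemma sup_over_ub {T : Type} (F : T -> Rbar) (t : T) : Rbar_le (F t) (sup_over F).
Proof.
  unfold sup_over, Rbar_lub. apply (proj1 (proj2_sig (Rbar_ex_lub _))). now exists t.
Qed.

Lemma rbar_max_r (a b : Rbar) : Rbar_le b (rbar_max a b).
Proof.
  unfold rbar_max, Rbar_lub. apply (proj1 (proj2_sig (Rbar_ex_lub _))). now right.
Qed.

Lemma sup_over_le_bound {T : Type} (F : T -> R) (c : R) :
  Rbar_le (sup_over (fun t => Finite (F t))) (Finite c) -> forall t, F t <= c.
Proof.
  intros H t. exact (Rbar_le_trans (F t) _ c (sup_over_ub (fun t => Finite (F t)) t) H).
Qed.

Lemma sup_over_lt_bound {T : Type} (F : T -> R) (c : R) :
  Rbar_lt (sup_over (fun t => Finite (F t))) (Finite c) -> forall t, F t < c.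
Proof.
  intros H t. exact (Rbar_le_lt_trans (F t) _ c (sup_over_ub (fun t => Finite (F t)) t) H).
Qed.

Lemma Rbar_glb_lt_ex (E : Rbar -> Prop) (c : R) :
  Rbar_lt (Rbar_glb E) (Finite c) -> exists r, E r /\ Rbar_lt r (Finite c).
Proof.
  intro H. apply NNPP; intro Hnone.
  unfold Rbar_glb in H.
  refine (Rbar_le_not_lt _ c (proj2 (proj2_sig (Rbar_ex_glb E)) c _) H).
  intros r Er. apply Rbar_not_lt_le. intro Hr. apply Hnone. now exists r.
Qed.

Lemma delta_isometry_dist {X Y : Type} (dX : X -> X -> R) (dY : Y -> Y -> R)
  (del : R) (j : X -> Y) :
  delta_isometry dX dY del j -> forall a b, Rabs (dY (j a) (j b) - dX a b) < del.
Proof.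
  intros H a b.
  exact (sup_over_lt_bound
    (fun p : X * X => Rabs (dY (j (fst p)) (j (snd p)) - dX (fst p) (snd p))) del
    (Rbar_le_lt_trans _ _ _ (rbar_max_r _ _) H) (a, b)).
Qed.

Lemma positive_lower_bound (l : list R) :
  exists m, 0 < m /\ forall r, In r l -> 0 < r -> m <= r.
Proof.
  induction l as [|a l [m [Hm Hle]]].
  - exists 1. split; [lra | intros r []].
  - destruct (Rlt_dec 0 a) as [Ha | Ha].
    + exists (Rmin a m). split; [now apply Rmin_glb_lt|].
      intros r [<- | Hr] Hr0; [apply Rmin_l|].
      apply Rle_trans with m; [apply Rmin_r | auto].
    + exists m. split; [exact Hm|]. intros r [<- | Hr] Hr0; [lra | auto].
Qed.

Section MetricSpace.

Context {X : Type} (d : X -> X -> R).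
Hypothesis d_metric : is_metric d.

Lemma dist_refl (x : X) : d x x = 0.
Proof. now apply (proj1 (proj2 d_metric)). Qed.

Lemma dist_sym (x y : X) : d x y = d y x.
Proof. apply (proj1 (proj2 (proj2 d_metric))). Qed.

Lemma dist_triangle (x y z : X) : d x z <= d x y + d y z.
Proof. apply (proj2 (proj2 (proj2 d_metric))). Qed.

Lemma continuous_on_const {W : Type} (dW : W -> W -> R) (A : W -> Prop) (c : X) :
  continuous_on dW d A (fun _ => c).
Proof.
  intros w _ eps Heps. exists 1. split; [lra|]. intros. rewrite dist_refl. exact Heps.
Qed.

Lemma open_ball (x : X) (r : R) : open_set d (fun w => d x w < r).
Proof.
  intros w Hw. exists (r - d x w). split; [lra|].
  intros y Hy. pose proof (dist_triangle x w y). lra.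
Qed.

(** A finite subcover has a smallest radius, which works for every point. *)
Lemma compact_cover_uniform_radius (I : Type) (U : I -> R -> X -> Prop) :
  compact_metric d ->
  (forall i r, 0 < r -> open_set d (U i r)) ->
  (forall w, exists i r, 0 < r /\ U i r w) ->
  exists del, 0 < del /\ forall w, exists i r, del <= r /\ U i r w.
Proof.
  intros Hcompact Hopen Hcover.
  destruct (Hcompact (I * R)%type (fun p w => 0 < snd p /\ U (fst p) (snd p) w))
    as [l Hl].
  - intros [i r] w [Hr Hw]. destruct (Hopen i r Hr w Hw) as [s [Hs Hball]].
    exists s. split; [exact Hs|]. intros y Hy. split; [exact Hr | now apply Hball].
  - intro w. destruct (Hcover w) as (i & r & Hr & Hw). now exists (i, r).
  - destruct (positive_lower_bound (map snd l)) as [del [Hdel Hle]].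
    exists del. split; [exact Hdel|]. intro w.
    destruct (Hl w) as [[i r] [Hin [Hr Hw]]]. exists i, r. split; [|exact Hw].
    apply Hle; [apply (in_map snd l (i, r) Hin) | exact Hr].
Qed.

Lemma open_partition_locally_constant (A U V : X -> Prop) :
  open_set d U -> open_set d V ->
  (forall w, A w -> U w \/ V w) -> (forall w, A w -> U w -> V w -> False) ->
  forall z, A z -> exists r, 0 < r /\ forall w, A w -> d z w < r -> (U w <-> U z).
Proof.
  intros HU HV Hcover Hdisj z Az.
  destruct (classic (U z)) as [Uz | nUz].
  - destruct (HU z Uz) as [r [Hr Hball]]. exists r. split; [exact Hr|].
    intros w _ Hw. split; [intros _; exact Uz | intros _; now apply Hball].
  - assert (Vz : V z) by (destruct (Hcover z Az); tauto).
    destruct (HV z Vz) as [r [Hr Hball]]. exists r. split; [exact Hr|].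
    intros w Aw Hw. split; [|tauto]. intro Uw. exfalso. exact (Hdisj w Aw Uw (Hball w Hw)).
Qed.

Inductive chain (x : X) (del : R) : X -> Prop :=
| chain_start : chain x del x
| chain_step y w : chain x del y -> d y w < del -> chain x del w.

Lemma chain_mono (x : X) (del del' : R) (w : X) :
  del <= del' -> chain x del w -> chain x del' w.
Proof.
  intros Hle H. induction H as [|y w _ IH Hyw]; [constructor|].
  apply chain_step with y; [exact IH | lra].
Qed.

Lemma chain_step_back (x : X) (del : R) (y w : X) :
  chain x del w -> d y w < del -> chain x del y.
Proof. intros Hw Hyw. apply chain_step with w; [exact Hw | now rewrite dist_sym]. Qed.

Lemma open_not_chain (x : X) (del : R) : 0 < del -> open_set d (fun w => ~ chain x del w).
Proof.
  intros Hdel w Hw. exists del. split; [exact Hdel|].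
  intros y Hy Hchain. exact (Hw (chain_step_back x del w y Hchain Hy)).
Qed.

Lemma chain_confined (x : X) (del : R) (P Q : X -> Prop) :
  (forall w, chain x del w -> P w \/ Q w) ->
  (forall p q, P p -> Q q -> d p q < del -> False) ->
  P x -> forall w, chain x del w -> P w.
Proof.
  intros Hcover Hsep Px w Hw. induction Hw as [|y w Hy IH Hyw]; [exact Px|].
  destruct (Hcover w (chain_step x del y w Hy Hyw)) as [Pw | Qw]; [exact Pw|].
  exfalso. exact (Hsep y w IH Qw Hyw).
Qed.

Lemma orbit_image_in_chain {Y : Type} (g : Y -> Y) (j : Y -> X) (del : R) (y : Y) :
  (forall z, d (j z) (j (g z)) < del) -> forall z, orbit g y z -> chain (j y) del (j z).
Proof.
  intros Hstep z [n [-> | Hback]].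
  - induction n as [|n IH]; [constructor|].
    apply chain_step with (j (Nat.iter n g y)); [exact IH | apply Hstep].
  - assert (Hpull : forall m w, chain (j y) del (j (Nat.iter m g w)) -> chain (j y) del (j w)).
    { induction m as [|m IH]; intros w Hw; [exact Hw|].
      apply IH, chain_step_back with (j (g (Nat.iter m g w))); [exact Hw | apply Hstep]. }
    apply (Hpull n). rewrite Hback. constructor.
Qed.

Definition chain_core (x w : X) : Prop := forall del, 0 < del -> chain x del w.

Lemma not_chain_core (x w : X) : ~ chain_core x w -> exists del, 0 < del /\ ~ chain x del w.
Proof.
  intro Hw. apply not_all_ex_not in Hw as [del Hdel].
  apply imply_to_and in Hdel. now exists del.
Qed.

Definition chains_shrink_at (x : X) : Prop :=
  forall eps, 0 < eps -> exists del, 0 < del /\ forall w, chain x del w -> d x w < eps.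

Section Compact.

Hypothesis d_compact : compact_metric d.

Lemma chain_core_connected (x : X) : connected_subset d (chain_core x).
Proof.
  intros (U & V & HU & HV & Hcover & (a & Ka & Ua) & (b & Kb & Vb) & Hdisj).
  pose (Good z r := chain_core x z /\
    forall w, chain_core x w -> d z w < 4 * r -> (U w <-> U z)).
  pose (Cell (i : option X) r w :=
    match i with Some z => Good z r /\ d z w < r | None => ~ chain x r w end).
  destruct (compact_cover_uniform_radius (option X) Cell d_compact) as [del [Hdel Hcell]].
  - intros [z|] r Hr w Hw; simpl in Hw.
    + destruct Hw as [Gz Hzw]. destruct (open_ball z r w Hzw) as [s [Hs Hball]].
      exists s. split; [exact Hs|]. intros y Hy. split; [exact Gz | now apply Hball].
    + exact (open_not_chain x r Hr w Hw).
  - intro w. destruct (classic (chain_core x w)) as [Kw | nKw].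
    + destruct (open_partition_locally_constant _ U V HU HV Hcover Hdisj w Kw)
        as [r [Hr Hloc]].
      exists (Some w), (r / 4). split; [lra|]. split; [split; [exact Kw|] | rewrite dist_refl; lra].
      intros w' Kw' Hd. apply Hloc; [exact Kw' | lra].
    + destruct (not_chain_core x w nKw) as [r [Hr Hnot]]. exists None, r. auto.
  - pose (P w := exists z r, del <= r /\ Good z r /\ d z w < r /\ U z).
    pose (Q w := exists z r, del <= r /\ Good z r /\ d z w < r /\ ~ U z).
    assert (HPQ : forall w, chain x del w -> P w \/ Q w).
    { intros w Hw. destruct (Hcell w) as ([z|] & r & Hle & Hzw).
      - destruct Hzw as [Gz Hzw].
        destruct (classic (U z)); [left | right]; exists z, r; auto.
      - exfalso. apply Hzw. now apply chain_mono with del. }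
    assert (HQP : forall w, chain x del w -> Q w \/ P w).
    { intros w Hw. destruct (HPQ w Hw); auto. }
    (* The larger of two cells closer than [del] contains the other's centre
       in its [4 r]-ball. *)
    assert (Hsep : forall p q, P p -> Q q -> d p q < del -> False).
    { intros p q (z & r & Hr & [Kz Gz] & Hzp & Uz) (z' & r' & Hr' & [Kz' Gz'] & Hzq & nUz') Hpq.
      apply nUz'.
      pose proof (dist_triangle z p z'). pose proof (dist_triangle p q z').
      pose proof (dist_triangle z' q z). pose proof (dist_triangle q p z).
      pose proof (dist_sym q z'). pose proof (dist_sym p z). pose proof (dist_sym p q).
      destruct (Rle_dec r' r).
      - apply (Gz z' Kz'); [lra | exact Uz].
      - apply (Gz' z Kz); [lra | exact Uz]. }
    assert (HsepQP : forall q p, Q q -> P p -> d q p < del -> False).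
    { intros q p Qq Pp Hqp. rewrite dist_sym in Hqp. exact (Hsep p q Pp Qq Hqp). }
    destruct (HPQ x (chain_start x del)) as [Px | Qx].
    + destruct (chain_confined x del P Q HPQ Hsep Px b (Kb del Hdel))
        as (z & r & Hr & [_ Gz] & Hzb & Uz).
      apply (Hdisj b Kb); [apply (Gz b Kb); [lra | exact Uz] | exact Vb].
    + destruct (chain_confined x del Q P HQP HsepQP Qx a (Ka del Hdel))
        as (z & r & Hr & [_ Gz] & Hza & nUz).
      apply nUz. apply (Gz a Ka); [lra | exact Ua].
Qed.

Lemma chain_components_shrink (x : X) : totally_disconnected d -> chains_shrink_at x.
Proof.
  intros Htd eps Heps.
  assert (Hcore : forall w, chain_core x w -> w = x).
  { intros w Kw. apply (Htd _ (chain_core_connected x)); [exact Kw | intros del _; constructor]. }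
  pose (Cell (near : bool) r w := if near then d x w < eps else ~ chain x r w).
  destruct (compact_cover_uniform_radius bool Cell d_compact) as [del [Hdel Hcell]].
  - intros [|] r Hr; [apply open_ball | now apply open_not_chain].
  - intro w. destruct (Rlt_dec (d x w) eps) as [Hnear | Hfar].
    + exists true, 1. split; [lra | exact Hnear].
    + assert (nKw : ~ chain_core x w).
      { intro Kw. apply Hfar. rewrite (Hcore w Kw), dist_refl. exact Heps. }
      destruct (not_chain_core x w nKw) as [r [Hr Hnot]]. exists false, r. auto.
  - exists del. split; [exact Hdel|]. intros w Hw.
    destruct (Hcell w) as ([|] & r & Hle & Hcw); [exact Hcw|].
    exfalso. apply Hcw. now apply chain_mono with del.
Qed.

End Compact.

Lemma top_stable_point_id (x : X) : chains_shrink_at x -> top_stable_point d (fun z => z) x.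
Proof.
  intros Hshrink eps Heps. destruct (Hshrink eps Heps) as [del [Hdel Hsmall]].
  exists (del / 2). split; [lra|]. intros g _ Hg.
  assert (Hstep : forall z, d z (g z) < del).
  { intro z. pose proof (sup_over_le_bound (fun z => d z (g z)) _ Hg z). lra. }
  exists (fun _ => x). split; [apply continuous_on_const | split; [reflexivity|]].
  intros z Hz. apply Rlt_le, Hsmall.
  destruct (Hz del Hdel) as [a [Ha Hza]].
  apply chain_step_back with a; [|exact Hza].
  exact (orbit_image_in_chain g (fun z => z) del x Hstep a Ha).
Qed.

Lemma GH_stable_point_id (x : X) : chains_shrink_at x -> GH_stable_point d (fun z => z) x.
Proof.
  intros Hshrink eps Heps. destruct (Hshrink eps Heps) as [del [Hdel Hsmall]].
  exists (Rmin (del / 2) eps). split; [apply Rmin_glb_lt; lra|].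
  intros Y dY HmY _ g _ Hgh.
  destruct (Rbar_glb_lt_ex _ _ Hgh)
    as (r & (del' & -> & Hdel' & i & j & _ & Hj & _ & Hjg) & Hlt).
  simpl in Hlt. pose proof (Rmin_l (del / 2) eps). pose proof (Rmin_r (del / 2) eps).
  exists j. split; [eapply Rbar_lt_le_trans; [exact Hj | simpl; lra]|].
  assert (Hstep : forall z, d (j z) (j (g z)) < del).
  { intro z. pose proof (sup_over_lt_bound (fun y => d (j (g y)) (j y)) _ Hjg z).
    rewrite dist_sym. lra. }
  intros y Hy. exists (fun _ => x). split; [apply continuous_on_const|]. split; [|reflexivity].
  intros z Hz. apply Hsmall. destruct (Hz (del / 2)) as [a [Ha Hza]]; [lra|].
  rewrite <- Hy. apply chain_step with (j a); [exact (orbit_image_in_chain g j del y Hstep a Ha)|].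
  pose proof (delta_isometry_dist dY d del' j Hj a z) as Haz.
  apply Rabs_def2 in Haz. destruct HmY as (_ & _ & HsymY & _). rewrite HsymY in Hza. lra.
Qed.

End MetricSpace.

Theorem corollary2p10 (X : Type) (d : X -> X -> R) :
  is_metric d -> compact_metric d -> totally_disconnected d ->
  forall x : X, top_stable_point d (fun z => z) x /\ GH_stable_point d (fun z => z) x.
Proof.
  intros Hmetric Hcompact Htd x.
  pose proof (chain_components_shrink d Hmetric Hcompact x Htd) as Hshrink.
  split; [exact (top_stable_point_id d Hmetric x Hshrink)
         | exact (GH_stable_point_id d Hmetric x Hshrink)].
Qed.
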